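(* Let $n\ge 2$. For $k\ge 1$ let $E_k$ be the $k\times k$ identity matrix (and $E_0$ the empty matrix). Define integer matrices $X_m$ of size $\frac{m(m-1)}{2}\times m$ for $m\ge 2$ inductively by $X_2=\begin{pmatrix}1&-1\end{pmatrix}$ and, for $m>2$, $X_m=\begin{pmatrix}\mathbf{1}& -E_{m-1}\\ \mathbf{0} & X_{m-1}\end{pmatrix}$, where $\mathbf{1}$ is the all-ones column vector of length $m-1$ and $\mathbf{0}$ is the zero column vector of length $\frac{(m-1)(m-2)}{2}$. Let \[ A_n=\begin{pmatrix}-E_n & -{}^tX_n\\ -X_n & -nE_{n(n-1)/2}\end{pmatrix}, \] a square integer matrix of size $n+\frac{n(n-1)}{2}$. Then the Smith normal form of $A_n$ over $\mathbb{Z}$ is \[ E_{2n-2}\oplus nE_{(n-2)(n-3)/2}\oplus O, \] where $O$ is the zero matrix (necessarily square of size $n-1$).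
   Context: ${}^tM$ denotes the transpose of $M$, and $D_1\oplus D_2\oplus D_3$ denotes the block-diagonal matrix with diagonal blocks $D_1,D_2,D_3$. (The matrix $A_n$ is the weighted incidence matrix of the plumbing graph obtained from the complete graph on $n$ vertices by giving each original vertex weight $-1$, inserting a vertex of weight $-n$ on each edge, with the two resulting half-edges signed $-$ and $+$.) *)

From mathcomp Require Import all_boot all_order all_algebra.
Set Implicit Arguments. Unset Strict Implicit. Unset Printing Implicit Defensive.
Import Order.TTheory GRing.Theory Num.Theory.

Fixpoint tri (m : nat) : nat := if m is m'.+1 then (m' + tri m')%N else 0%N.

Lemma triE m : tri m = (m * (m - 1)) %/ 2.
Proof.
elim: m => // m IH /=; rewrite IH.
case: m {IH} => [|m] //.
rewrite !subn1 /=.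
have -> : (m.+2 * m.+1 = m.+1 * m + m.+1 * 2)%N by rewrite -mulnDr addn2 mulnC.
by rewrite divnDr ?dvdn_mull // mulnK // addnC.
Qed.

Local Open Scope ring_scope.

(* X_m : integer matrix of size tri m x m.  X 0, X 1 are empty placeholders;
   for m >= 2 the recursion is the paper's
   X_(m) = [ 1 | -E_(m-1) ; 0 | X_(m-1) ], and it yields X_2 = (1 -1). *)
Fixpoint Xmx (m : nat) : 'M[int]_(tri m, m) :=
  match m return 'M[int]_(tri m, m) with
  | 0 => 0
  | p.+1 =>
    match p return 'M[int]_(tri p, p) -> 'M[int]_(tri p.+1, p.+1) with
    | 0 => fun _ => 0
    | m'.+1 => fun X =>
      row_mx (col_mx (const_mx 1 : 'M[int]_(m'.+1, 1))
                     (0 : 'M[int]_(tri m'.+1, 1)))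
             (col_mx (- (1%:M : 'M[int]_(m'.+1))) X)
    end (Xmx p)
  end.

Definition Amx (n : nat) : 'M[int]_(n + tri n) :=
  block_mx (- (1%:M : 'M[int]_n)) (- (Xmx n)^T)
           (- Xmx n) (- (n%:R *: (1%:M : 'M[int]_(tri n)))).

Definition diagseq (m n : nat) (d : seq int) : 'M[int]_(m, n) :=
  \matrix_(i, j) (d`_i *+ (i == j :> nat)).

Definition is_Smith_normal_form (m n : nat) (A D : 'M[int]_(m, n)) : Prop :=
  exists d : seq int,
    [/\ sorted (fun a b => (a %| b)%Z) d, all (fun a => 0 <= a) d,
        size d = minn m n,
        D = diagseq m n d &
        exists2 L : 'M[int]_m, L \in unitmx &
        exists2 R : 'M[int]_n, R \in unitmx & L *m A *m R = D].

From mathcomp Require Import all_boot all_order all_algebra fingroup perm zify.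
Set Implicit Arguments. Unset Strict Implicit. Unset Printing Implicit Defensive.
Import Order.TTheory GRing.Theory Num.Theory.
Local Open Scope ring_scope.

(* Eliminating the pivot block -E_n makes A_n equivalent to E_n (+) (n E - X_n X_n^T).
   With X_n = [1, -E; 0, X_(n-1)], X_(n-1)^T X_(n-1) = (n-1) E - J and X_(n-1) 1 = 0
   (J the all-ones matrix), one more row and column operation turn n E - X_n X_n^T
   into [0, 0; X_(n-1), n E].  Adding all columns of X_(n-1) to its first one kills
   that column (the rows of X_(n-1) sum to 0), and a row operation then leaves a
   partial identity of rank n-2.  In [0, 0; pid_(n-2), n E] the n-2 unit pivots clear
   the entries n in their rows, and what is left is a permuted diagonal matrix with
   n-2 ones, tri(n-2) entries n and n-1 zeros. *)

Section MatrixEquivalence.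

Variable R : comUnitRingType.

Definition mxequiv m n (A B : 'M[R]_(m, n)) :=
  exists2 P : 'M_m, P \in unitmx & exists2 Q : 'M_n, Q \in unitmx & P *m A *m Q = B.

Lemma mxequiv_refl m n (A : 'M[R]_(m, n)) : mxequiv A A.
Proof. by exists 1%:M; rewrite ?unitmx1 //; exists 1%:M; rewrite ?unitmx1 ?mul1mx ?mulmx1. Qed.

Lemma mxequiv_trans m n (A B C : 'M[R]_(m, n)) :
  mxequiv A B -> mxequiv B C -> mxequiv A C.
Proof.
move=> [P1 uP1 [Q1 uQ1 <-]] [P2 uP2 [Q2 uQ2 <-]].
exists (P2 *m P1); first by rewrite unitmx_mul uP1 uP2.
by exists (Q1 *m Q2); rewrite ?unitmx_mul ?uQ1 ?uQ2 // !mulmxA.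
Qed.

Lemma unitmxN1 n : (- 1%:M : 'M[R]_n) \in unitmx.
Proof. by rewrite -scaleN1r unitmxZ ?unitrN1 ?unitmx1. Qed.

Lemma mxequivN m n (A : 'M[R]_(m, n)) : mxequiv A (- A).
Proof.
exists (- 1%:M); first exact: unitmxN1.
by exists 1%:M; rewrite ?unitmx1 ?mulmx1 ?mulNmx ?mul1mx.
Qed.

Lemma unitmx_ublock m n (A : 'M[R]_m) (B : 'M_(m, n)) (D : 'M_n) :
  (block_mx A B 0 D \in unitmx) = (A \in unitmx) && (D \in unitmx).
Proof. by rewrite !unitmxE det_ublock unitrM. Qed.

Lemma unitmx_lblock m n (A : 'M[R]_m) (C : 'M_(n, m)) (D : 'M_n) :
  (block_mx A 0 C D \in unitmx) = (A \in unitmx) && (D \in unitmx).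
Proof. by rewrite !unitmxE det_lblock unitrM. Qed.

Lemma mxequiv_block_diag m n (A A' : 'M[R]_m) (B B' : 'M[R]_n) :
  mxequiv A A' -> mxequiv B B' -> mxequiv (block_mx A 0 0 B) (block_mx A' 0 0 B').
Proof.
move=> [P1 uP1 [Q1 uQ1 <-]] [P2 uP2 [Q2 uQ2 <-]].
exists (block_mx P1 0 0 P2); first by rewrite unitmx_ublock uP1 uP2.
exists (block_mx Q1 0 0 Q2); first by rewrite unitmx_ublock uQ1 uQ2.
by rewrite !mulmx_block !(mulmx0, mul0mx, addr0, add0r).
Qed.

Lemma mxequiv_reindex m n (A : 'M[R]_(m, n)) (f : 'I_m -> 'I_m) (g : 'I_n -> 'I_n) :
  injective f -> injective g -> mxequiv A (mxsub f g A).
Proof.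
move=> f_inj g_inj.
exists (perm_mx (perm f_inj)); first exact: unitmx_perm.
exists (perm_mx (perm g_inj)^-1%g); first exact: unitmx_perm.
by rewrite -col_permE -row_permE; apply/matrixP => i j; rewrite !mxE !permE.
Qed.

Lemma mxequiv_schur m n (B : 'M[R]_(m, n)) (C : 'M_(n, m)) (D : 'M_n) :
  mxequiv (block_mx 1%:M B C D) (block_mx 1%:M 0 0 (D - C *m B)).
Proof.
exists (block_mx 1%:M 0 (- C) 1%:M); first by rewrite unitmx_lblock !unitmx1.
exists (block_mx 1%:M (- B) 0 1%:M); first by rewrite unitmx_ublock !unitmx1.
rewrite !mulmx_block !(mulmx0, mul0mx, mul1mx, mulmx1, addr0, add0r).
by rewrite !addNr mul0mx add0r mulNmx addrC.
Qed.

Lemma mxequiv_block_gram p q (Y : 'M[R]_(q, p)) (c : R) :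
  Y^T *m Y *m Y^T = (c - 1) *: Y^T ->
  mxequiv (block_mx (Y^T *m Y) Y^T Y (c%:M - Y *m Y^T)) (block_mx 0 0 Y c%:M).
Proof.
move=> YtYYt.
exists (block_mx 1%:M (- Y^T) 0 1%:M); first by rewrite unitmx_ublock !unitmx1.
exists (block_mx 1%:M Y^T 0 1%:M); first by rewrite unitmx_ublock !unitmx1.
rewrite !mulmx_block !(mulmx0, mul0mx, mul1mx, mulmx1, addr0, add0r).
rewrite mulNmx subrr mul0mx add0r [_ + (_ - _)]addrC subrK.
by rewrite mulmxBr mul_mx_scalar scalerN mulNmx mulmxA YtYYt opprK scalerBl scale1r addKr subrr.
Qed.

Lemma mxequiv_block_zero_scalar p q (X Y : 'M[R]_(q, p)) (c : R) :
  mxequiv X Y -> mxequiv (block_mx (0 : 'M_p) 0 X c%:M) (block_mx 0 0 Y c%:M).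
Proof.
move=> [P uP [Q uQ <-]].
exists (block_mx 1%:M 0 0 P); first by rewrite unitmx_ublock unitmx1.
exists (block_mx Q 0 0 (invmx P)); first by rewrite unitmx_ublock unitmx_inv uP uQ.
rewrite !mulmx_block !(mulmx0, mul0mx, mul1mx, mulmx1, addr0, add0r).
by rewrite mul_mx_scalar -scalemxAl mulmxV // scalemx1.
Qed.

Lemma mxequiv_block_pid_copid p q r (c : R) : (r <= p)%N ->
  mxequiv (block_mx (0 : 'M_p) 0 (pid_mx r : 'M_(q, p)) c%:M)
          (block_mx 0 0 (pid_mx r) (c *: copid_mx r)).
Proof.
move=> le_rp; exists 1%:M; first exact: unitmx1.
exists (block_mx 1%:M (- c *: pid_mx r) 0 1%:M); first by rewrite unitmx_ublock !unitmx1.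
rewrite mul1mx mulmx_block !(mulmx0, mul0mx, mulmx1, addr0, add0r).
by rewrite -scalemxAr mul_pid_mx minnn (minn_idPr le_rp) scaleNr scalerBr scalemx1 addrC.
Qed.

Lemma mxequiv_row_mx0_pid t m :
  mxequiv (row_mx (0 : 'M[R]_(t, 1)) (pid_mx m : 'M_(t, m))) (pid_mx m).
Proof.
have -> : pid_mx m = mxsub id (@ordS _) (row_mx (0 : 'M[R]_(t, 1)) (pid_mx m : 'M_(t, m))).
  apply/matrixP => i j; rewrite !mxE.
  have ordSE : (j.+1 %% (1 + m))%N = if (j < m)%N then j.+1 else 0%N.
    have := ltn_ord j; case: (ltnP j m) => jm lt_j; first by rewrite modn_small //; lia.
    by rewrite (_ : j.+1 = 1 + m)%N ?modnn //; lia.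
  case: splitP => j' /= Ej; rewrite !mxE; move: Ej; rewrite ordSE; case: (ltnP j m) => jm.
  - by have := ltn_ord j'; lia.
  - by move=> _; case: eqP => // ->; rewrite ltnNge jm andbF.
  - by move=> /succn_inj ->.
  - by [].
exact: mxequiv_reindex (@inj_id _) (@ordS_inj _).
Qed.

End MatrixEquivalence.

Lemma mul_const1_mx (R : nzRingType) a b c :
  (const_mx 1 : 'M[R]_(a, b)) *m (const_mx 1 : 'M[R]_(b, c)) = b%:R *: const_mx 1.
Proof.
apply/matrixP => i j; rewrite !mxE.
under eq_bigr do rewrite !mxE mulr1.
by rewrite sumr_const card_ord mulr1.
Qed.

Lemma block_pid_copidE (R : nzRingType) p q r (c : R) (i j : 'I_(p + q)) :
  block_mx (0 : 'M_p) 0 (pid_mx r : 'M_(q, p)) (c *: copid_mx r) i j =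
  if (i < p)%N then 0
  else if (j < p)%N then ((i == p + j :> nat) && (i < p + r)%N)%:R
  else c *+ ((i == j :> nat) && (p + r <= i)%N).
Proof.
rewrite !mxE; case: splitP => i' Ei; first by rewrite row_mx0 mxE.
rewrite mxE; case: splitP => j' Ej; rewrite !mxE Ei ?Ej eqn_add2l ?ltn_add2l ?leq_add2l //.
have [<-|ne] := eqVneq i' j'; rewrite /=.
  by rewrite eqxx; case: ltnP; rewrite /= ?mulr1n ?mulr0n ?subrr ?subr0 ?mulr0 ?mulr1.
by rewrite (negbTE (ne : (i' : nat) != j')) /= !mulr0n subrr mulr0.
Qed.

Lemma diagseq_nseq_cat a b (x : int) (d : seq int) :
  diagseq (a + b) (a + b) (nseq a x ++ d) = block_mx x%:M 0 0 (diagseq b b d).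
Proof.
apply/matrixP => i j; rewrite !mxE nth_cat size_nseq nth_nseq.
case: splitP => i' ->; rewrite mxE; case: splitP => j' ->; rewrite !mxE ?ltn_ord //.
- by rewrite (_ : (i' == a + j' :> nat) = false) ?mulr0n //; have := ltn_ord i'; lia.
- by rewrite (_ : (a + i' == j' :> nat) = false) ?mulr0n //; have := ltn_ord j'; lia.
- by rewrite addKn eqn_add2l.
Qed.

Lemma mxequiv_block_pid_diagseq p q r (c : int) : (r <= p)%N -> (r <= q)%N ->
  mxequiv (block_mx (0 : 'M_p) 0 (pid_mx r : 'M_(q, p)) c%:M)
          (diagseq (p + q) (p + q) (nseq r 1 ++ nseq (q - r) c ++ nseq p 0)).
Proof.
move=> le_rp le_rq; apply: mxequiv_trans (mxequiv_block_pid_copid _ _ le_rp) _.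
(* rho moves the p zero rows to the bottom; sigma lists the columns of the unit
   pivots, then those of the entries c, then the p zero columns. *)
pose rho (i : 'I_(p + q)) := insubd i (if i < q then p + i else i - q)%N.
pose sigma (j : 'I_(p + q)) :=
  insubd j (if j < r then j : nat else if j < q then p + j else j - q + r)%N.
have rhoE i : val (rho i) = (if i < q then p + i else i - q)%N.
  by rewrite val_insubd ifT //; have := ltn_ord i; case: ifP => ?; lia.
have sigmaE j : val (sigma j) = (if j < r then j : nat else if j < q then p + j else j - q + r)%N.
  by rewrite val_insubd ifT //; have := ltn_ord j; case: ifP => ?; [|case: ifP => ?]; lia.
have -> : diagseq (p + q) (p + q) (nseq r 1 ++ nseq (q - r) c ++ nseq p 0) =
    mxsub rho sigma (block_mx 0 0 (pid_mx r) (c *: copid_mx r)).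
{ apply/matrixP => i j; rewrite [LHS]mxE [RHS]mxE block_pid_copidE.
  rewrite !nth_cat !size_nseq !nth_nseq rhoE sigmaE.
  have := ltn_ord i; have := ltn_ord j.
  have [/val_inj <-|nij] := eqVneq (i : nat) j; rewrite ?mulr1n ?mulr0n.
  all: case: (ltnP i q) => iq; case: (ltnP i r) => ir; case: (ltnP j q) => jq; case: (ltnP j r) => jr.
  all: rewrite /= => ? ?; do ?[case: ifP => ? | case: eqP => ?]; rewrite ?mulr1n ?mulr0n //; lia. }
apply: mxequiv_reindex => x y /(congr1 val) E; apply: ord_inj; move: E.
- by rewrite !rhoE; have := ltn_ord x; have := ltn_ord y; do ?case: ifP => ?; lia.
- by rewrite !sigmaE; have := ltn_ord x; have := ltn_ord y; do ?case: ifP => ?; lia.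
Qed.

Lemma sorted_dvdz_nseq (a b c : nat) (x : int) :
  sorted (fun u v => (u %| v)%Z) (nseq a 1 ++ nseq b x ++ nseq c 0).
Proof.
have pairwise_nseq m y : pairwise (fun u v => (u %| v)%Z) (nseq m y).
  by elim: m => //= m ->; rewrite all_nseq dvdzz orbT.
rewrite sorted_pairwise; last exact: dvdz_trans.
rewrite !pairwise_cat !pairwise_nseq allrel_catr /allrel !all_nseq.
by rewrite /= !all_nseq dvd1z !dvdz0 !orbT.
Qed.

Lemma XmxSS k : Xmx k.+2 =
  row_mx (col_mx (const_mx 1 : 'M_(k.+1, 1)) (0 : 'M_(tri k.+1, 1)))
         (col_mx (- 1%:M) (Xmx k.+1)).
Proof. by []. Qed.

Lemma Xmx_mul_const1 m p : Xmx m *m (const_mx 1 : 'M_(m, p)) = 0.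
Proof.
elim: m p => [|m IH] p; first by rewrite flatmx0.
case: m IH => [|k] IH; first by rewrite /= mul0mx.
change (@mulmx _ (tri k.+2) (1 + k.+1) p (Xmx k.+2) (const_mx 1) = 0).
rewrite XmxSS -(col_mx_const 1 k.+1 p (1 : int)) mul_row_col !mul_col_mx IH.
rewrite !mul0mx mulNmx mul1mx mul_const1_mx scale1r.
by rewrite add_col_mx addr0 subrr col_mx0.
Qed.

Lemma const1_mul_trXmx m p : (const_mx 1 : 'M_(p, m)) *m (Xmx m)^T = 0.
Proof. by rewrite -(trmx_const m p (1 : int)) -trmx_mul Xmx_mul_const1 trmx0. Qed.

Lemma trXmx_mul_Xmx m : (Xmx m)^T *m Xmx m = m%:R%:M - const_mx 1.
Proof.
elim: m => [|m IH]; first by rewrite thinmx0 flatmx0.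
case: m IH => [|k] IH.
  by rewrite /= mulmx0; apply/matrixP => i j; rewrite !mxE !ord1.
change (@mulmx _ (1 + k.+1) (k.+1 + tri k.+1) (1 + k.+1)
  (@trmx _ (k.+1 + tri k.+1) (1 + k.+1) (Xmx k.+2)) (Xmx k.+2) =
  (k.+2)%:R%:M - (const_mx 1 : 'M_(1 + k.+1))).
rewrite XmxSS tr_row_mx !tr_col_mx mul_col_row !mul_row_col IH.
rewrite !trmx0 !mul0mx !mulmx0 !addr0 trmx_const mul_const1_mx.
rewrite mulmxN [(- _)^T]raddfN /= trmx1 mulmxN mulNmx !mul1mx mulmx1 ?mulNmx ?mulmx1 ?opprK.
rewrite (scalar_mx_block 1 k.+1) -(block_mx_const 1 k.+1 1 k.+1 (1 : int)).
rewrite opp_block_mx add_block_mx !sub0r.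
congr block_mx; apply/matrixP => i j; rewrite !mxE ?ord1 /= ?mulr1.
- by rewrite mulr1n; lia.
- by case: (i == j); rewrite /= ?mulr1n ?mulr0n; lia.
Qed.

Lemma Xmx_mul_trXmx k : Xmx k.+2 *m (Xmx k.+2)^T =
  block_mx (const_mx 1 + 1%:M) (- (Xmx k.+1)^T) (- Xmx k.+1) (Xmx k.+1 *m (Xmx k.+1)^T).
Proof.
change (@mulmx _ (k.+1 + tri k.+1) (1 + k.+1) (k.+1 + tri k.+1)
  (Xmx k.+2) (@trmx _ (k.+1 + tri k.+1) (1 + k.+1) (Xmx k.+2)) =
  block_mx (const_mx 1 + 1%:M) (- (Xmx k.+1)^T) (- Xmx k.+1) (Xmx k.+1 *m (Xmx k.+1)^T)).
rewrite XmxSS tr_row_mx !tr_col_mx mul_row_col !mul_col_row.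
rewrite !trmx0 !mul0mx !mulmx0 trmx_const mul_const1_mx scale1r [(- _)^T]raddfN /= trmx1.
rewrite !mulNmx !mulmxN !mul1mx !mulmx1 opprK.
by rewrite add_block_mx !(addr0, add0r).
Qed.

Lemma Xmx_equiv_pid m : mxequiv (Xmx m.+1) (pid_mx m).
Proof.
case: m => [|k]; first by rewrite [Xmx 1]flatmx0 pid_mx_0; apply: mxequiv_refl.
apply: (@mxequiv_trans _ _ _ _ (row_mx (0 : 'M_(tri k.+2, 1)) (pid_mx k.+1)));
  last exact: mxequiv_row_mx0_pid.
rewrite pid_mx_col.
exists (block_mx (- 1%:M) 0 (Xmx k.+1) 1%:M); first by rewrite unitmx_lblock unitmxN1 unitmx1.
exists (block_mx 1%:M 0 (const_mx 1) 1%:M); first by rewrite unitmx_lblock !unitmx1.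
rewrite -mulmxA XmxSS mul_row_block !mulmx1 !mulmx0 add0r [col_mx (- _) _ *m _]mul_col_mx.
rewrite (Xmx_mul_const1 k.+1 1) mulNmx mul1mx add_col_mx addr0 subrr col_mx0.
by rewrite mul_mx_row mul_block_col mulmx0 mul0mx addr0 !mulmxN !mulmx1 opprK mul1mx addNr.
Qed.

Lemma Xmx_gram_equiv k :
  mxequiv ((k.+2)%:R%:M - Xmx k.+2 *m (Xmx k.+2)^T) (block_mx 0 0 (Xmx k.+1) (k.+2)%:R%:M).
Proof.
have -> : (k.+2)%:R%:M - Xmx k.+2 *m (Xmx k.+2)^T = block_mx ((Xmx k.+1)^T *m Xmx k.+1)
    (Xmx k.+1)^T (Xmx k.+1) ((k.+2)%:R%:M - Xmx k.+1 *m (Xmx k.+1)^T).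
  rewrite Xmx_mul_trXmx trXmx_mul_Xmx (scalar_mx_block k.+1 (tri k.+1)).
  rewrite opp_block_mx add_block_mx !sub0r !opprK; congr block_mx.
  by apply/matrixP => i j; rewrite !mxE; case: (i == j); rewrite ?mulr1n ?mulr0n; lia.
apply: mxequiv_block_gram.
by rewrite trXmx_mul_Xmx mulmxBl mul_scalar_mx const1_mul_trXmx subr0 -[(k.+2)%:R]natr1 addrK.
Qed.

Lemma Amx_equiv_schur n :
  mxequiv (Amx n) (block_mx 1%:M 0 0 (n%:R%:M - Xmx n *m (Xmx n)^T)).
Proof.
have -> : Amx n = - block_mx 1%:M (Xmx n)^T (Xmx n) n%:R%:M.
  by rewrite /Amx opp_block_mx scalemx1.
apply: mxequiv_trans (mxequivN _) _; rewrite opprK; exact: mxequiv_schur.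
Qed.

Lemma Amx_equiv_diagseq k :
  mxequiv (Amx k.+2) (diagseq _ _
    (nseq k.+2 1 ++ nseq k 1 ++ nseq (tri k) (k.+2)%:R ++ nseq k.+1 0)).
Proof.
rewrite diagseq_nseq_cat; apply: mxequiv_trans (Amx_equiv_schur _) _.
apply: mxequiv_block_diag; first exact: mxequiv_refl.
apply: mxequiv_trans (Xmx_gram_equiv k) _.
apply: mxequiv_trans (mxequiv_block_zero_scalar _ (Xmx_equiv_pid k)) _.
by have := mxequiv_block_pid_diagseq (k.+2)%:R (leqnSn k) (leq_addr (tri k) k); rewrite addKn.
Qed.

Lemma Smith_seq_AmxE k :
  nseq (2 * k.+2 - 2) 1 ++ nseq (tri (k.+2 - 2)) (k.+2)%:Z ++ nseq (k.+2 - 1) 0 =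
  nseq k.+2 1 ++ nseq k 1 ++ nseq (tri k) (k.+2)%:R ++ nseq k.+1 (0 : int).
Proof.
rewrite catA -nseqD natz.
have -> : (2 * k.+2 - 2 = k.+2 + k)%N by lia.
by have -> : (k.+2 - 2 = k)%N by lia.
Qed.

Theorem theorem4p4 (n : nat) (hn : (2 <= n)%N) :
  is_Smith_normal_form (Amx n)
    (diagseq (n + tri n) (n + tri n)
       (nseq (2 * n - 2) 1 ++ nseq (tri (n - 2)) (n%:Z) ++ nseq (n - 1) 0)).
Proof.
case: n hn => [|[|k]] // _.
rewrite Smith_seq_AmxE.
exists (nseq k.+2 1 ++ nseq k 1 ++ nseq (tri k) (k.+2)%:R ++ nseq k.+1 0).
split; last exact: Amx_equiv_diagseq.
- by rewrite catA -nseqD sorted_dvdz_nseq.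
- by rewrite !all_cat !all_nseq ler01 ler0n lexx !orbT.
- by rewrite !size_cat !size_nseq minnn /=; lia.
- by [].
Qed.
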